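(* Let $\Gamma=(\mathcal{M},K)$ be a $d$-dimensional grid and let $\sigma$ be an outmap on $\Gamma$ with $\sigma(p)\cap p=\emptyset$ for every vertex $p$. Let $\Gamma'$ and $\Gamma''$ be two nonempty induced subgrids of $\Gamma$ with disjoint vertex sets, such that the union of their vertex sets is the vertex set of a nonempty induced subgrid $\Gamma'\cup\Gamma''$ of $\Gamma$. Let $x$ be the unique sink of $\Gamma'$ and $y$ the unique sink of $\Gamma''$ (with respect to the restricted outmaps). Then either (a) one of $x$, $y$ is the unique sink of $\Gamma'\cup\Gamma''$, or (b) $\sigma$ is not a unique sink orientation of $\Gamma$, and $\Gamma$ with $\sigma$ admits a violation of type (GUV1) or (GUV2) defined below.
   Context: Grid: let $n,d$ be positive integers, $\mathcal{M}=\{1,\dots,n\}$ (the directions), and $K=(\kappa_1,\dots,\kappa_d)$ a partition of $\mathcal{M}$ into ordered sets with $|\kappa_i|\ge 2$. The grid $\Gamma=(\mathcal{M},K)$ is the undirected graph with vertex set $V=\{p\subseteq\mathcal{M} : |p\cap\kappa_i|=1 \text{ for } i=1,\dots,d\}$ and edge set $\{\{p,q\}: p,q\in V,\ |p\oplus q|=2\}$ ($\oplus$ = symmetric difference). An outmap is a function $\sigma:V\to\mathcal{P}(\mathcal{M})$; $\sigma(p)$ is the set of directions in which $p$ has outgoing edges (edges of $p$ in other directions are incoming). A nonempty induced subgrid is given by $\mathcal{M}'\subseteq\mathcal{M}$ with $\mathcal{M}'\cap\kappa_i\neq\emptyset$ for all $i$; its vertices are $V'=\{p\subseteq\mathcal{M}':|p\cap\kappa_i|=1\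 \forall i\}$, its edges are those of $\Gamma$ between vertices of $V'$, and its restricted outmap is $\sigma'(p)=\sigma(p)\cap\mathcal{M}'$. A sink of a subgrid is a vertex $p$ with $\sigma'(p)=\emptyset$. $\sigma$ is a unique sink orientation (USO) if every nonempty induced subgrid has a unique sink. The refined index of an outmap $\sigma'$ on subgrid $(\mathcal{M}',K')$ is $r_{\sigma'}(p)=(|\sigma'(p)\cap\kappa'_1|,\dots,|\sigma'(p)\cap\kappa'_d|)$. Violations: (GUV1) a vertex $p$ with $p\cap\sigma(p)\neq\emptyset$; (GUV2) an induced subgrid $(\mathcal{M}',K')$ with restricted outmap $\sigma'$ and two distinct vertices $p\neq q$ of it with $r_{\sigma'}(p)=r_{\sigma'}(q)$. *)

From mathcomp Require Import all_boot.
Set Implicit Arguments. Unset Strict Implicit. Unset Printing Implicit Defensive.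

(* Directions M = 'I_n.  The partition K = (kappa_1,...,kappa_d) is encoded by
   a block-assignment function blk : 'I_n -> 'I_d; kappa_i = block blk i. *)
Definition block (n d : nat) (blk : 'I_n -> 'I_d) (i : 'I_d) : {set 'I_n} :=
  [set m | blk m == i].

Definition grid_ok (n d : nat) (blk : 'I_n -> 'I_d) : Prop :=
  forall i : 'I_d, 2 <= #|block blk i|.

Definition subgrid (n d : nat) (blk : 'I_n -> 'I_d) (M' : {set 'I_n}) : bool :=
  [forall i : 'I_d, M' :&: block blk i != set0].

Definition vertex_of (n d : nat) (blk : 'I_n -> 'I_d) (M' p : {set 'I_n}) : bool :=
  (p \subset M') && [forall i : 'I_d, #|p :&: (M' :&: block blk i)| == 1].

Definition vertex (n d : nat) (blk : 'I_n -> 'I_d) (p : {set 'I_n}) : bool :=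
  vertex_of blk setT p.

(* outmaps: sigma : {set 'I_n} -> {set 'I_n}; only its values on vertices matter. *)

(* p is a sink of the subgrid M' for the restricted outmap sigma'(p) = sigma p :&: M' *)
Definition is_sink (n d : nat) (blk : 'I_n -> 'I_d) (sigma : {set 'I_n} -> {set 'I_n})
  (M' p : {set 'I_n}) : bool :=
  vertex_of blk M' p && (sigma p :&: M' == set0).

Definition unique_sink (n d : nat) (blk : 'I_n -> 'I_d) (sigma : {set 'I_n} -> {set 'I_n})
  (M' p : {set 'I_n}) : Prop :=
  is_sink blk sigma M' p /\ forall q, is_sink blk sigma M' q -> q = p.

Definition USO (n d : nat) (blk : 'I_n -> 'I_d) (sigma : {set 'I_n} -> {set 'I_n}) : Prop :=
  forall M' : {set 'I_n}, subgrid blk M' -> exists p, unique_sink blk sigma M' p.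

Definition refined_index (n d : nat) (blk : 'I_n -> 'I_d) (sigma : {set 'I_n} -> {set 'I_n})
  (M' p : {set 'I_n}) : 'I_d -> nat :=
  fun i => #|(sigma p :&: M') :&: (M' :&: block blk i)|.

Definition GUV1 (n d : nat) (blk : 'I_n -> 'I_d) (sigma : {set 'I_n} -> {set 'I_n}) : Prop :=
  exists p, vertex blk p /\ p :&: sigma p != set0.

Definition GUV2 (n d : nat) (blk : 'I_n -> 'I_d) (sigma : {set 'I_n} -> {set 'I_n}) : Prop :=
  exists M' p q, [/\ subgrid blk M', vertex_of blk M' p, vertex_of blk M' q, p != q &
    forall i, refined_index blk sigma M' p i = refined_index blk sigma M' q i].

From Stdlib Require Import Classical.
From mathcomp Require Import all_boot.
Set Implicit Arguments. Unset Strict Implicit. Unset Printing Implicit Defensive.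

(* If no vertex has an outgoing edge along one of its own coordinates, the
   refined index of a vertex of a subgrid lies in the box of vectors r with
   r_i < |kappa'_i|, and this box has exactly as many elements as the subgrid
   has vertices.  Without a (GUV2) violation the refined index is injective on
   the vertices, hence onto the box; the preimage of the zero vector is a sink,
   and it is unique since all sinks have refined index zero.  So in the absence
   of violations every subgrid, in particular the union, has a unique sink, and
   a sink of the union is a sink of whichever of the two parts contains it. *)

Section Grid.

Variables (n d : nat) (blk : 'I_n -> 'I_d).

Lemma vertex_ofS M p : vertex_of blk M p -> p \subset M.
Proof. by case/andP. Qed.

Lemma vertex_of_vertex M p : vertex_of blk M p -> vertex blk p.
Proof.
case/andP=> pM /forallP p1; apply/andP; split; first exact: subsetT.
apply/forallP=> i; rewrite -(eqP (p1 i)); apply/eqP; apply: eq_card => m.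
by rewrite !inE; case mp: (m \in p); rewrite //= (subsetP pM _ mp).
Qed.

Definition transversal_vertex (f : 'I_d -> 'I_n) : {set 'I_n} :=
  [set m | m == f (blk m)].

Section Transversal.

Variables (M : {set 'I_n}) (f : 'I_d -> 'I_n).
Hypothesis f_block : forall i, f i \in M :&: block blk i.

Lemma blk_transversal i : blk (f i) = i.
Proof. by have := f_block i; rewrite !inE => /andP[_ /eqP]. Qed.

Lemma mem_transversal_vertex i : f i \in transversal_vertex f.
Proof. by rewrite inE blk_transversal. Qed.

Lemma transversal_vertex_of : vertex_of blk M (transversal_vertex f).
Proof.
apply/andP; split.
  apply/subsetP=> m; rewrite inE => /eqP ->.
  by have := f_block (blk m); rewrite inE => /andP[].
apply/forallP=> i; apply/eqP; rewrite -(cards1 (f i)); apply: eq_card => m.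
rewrite !inE; apply/idP/idP; first by case/and3P=> /eqP fm _ /eqP <-; apply/eqP.
move/eqP=> ->; have := f_block i; rewrite !inE => /andP[-> /eqP ->].
by rewrite !eqxx.
Qed.

End Transversal.

Lemma transversal_vertex_inj M f g :
  (forall i, f i \in M :&: block blk i) -> (forall i, g i \in M :&: block blk i) ->
  transversal_vertex f = transversal_vertex g -> f =1 g.
Proof.
move=> fP gP efg i; have := mem_transversal_vertex fP i.
by rewrite efg inE (blk_transversal fP) => /eqP.
Qed.

Lemma subgrid_subset M M' :
  subgrid blk M -> (forall p, vertex_of blk M p -> vertex_of blk M' p) ->
  M \subset M'.
Proof.
move=> /forallP M_blocks MM'; apply/subsetP=> m mM.
pose f i := if i == blk m then m else odflt m [pick x in M :&: block blk i].
have fP i : f i \in M :&: block blk i.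
  rewrite /f; case: eqP => [->|_]; first by rewrite !inE mM eqxx.
  case: pickP => [x //|none].
  by move: (M_blocks i); rewrite -card_gt0 (eq_card0 none).
apply: (subsetP (vertex_ofS (MM' _ (transversal_vertex_of fP)))).
by rewrite inE /f eqxx.
Qed.

Definition vertex_set M := [set p | vertex_of blk M p].

Definition index_box M :=
  [set r : {ffun 'I_d -> 'I_n} | [forall i, r i < #|M :&: block blk i|]].

Hypothesis n_gt0 : 0 < n.
Let o := Ordinal n_gt0.

Lemma card_index_box_leq M : #|index_box M| <= #|vertex_set M|.
Proof.
pose pick_nth (r : {ffun 'I_d -> 'I_n}) i := nth o (enum (M :&: block blk i)) (r i).
have pick_nthP r i : r \in index_box M -> pick_nth r i \in M :&: block blk i.
  rewrite inE => /forallP/(_ i) r_i; rewrite -mem_enum; apply: mem_nth.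
  by rewrite -cardE.
have pick_inj : {in index_box M &, injective (transversal_vertex \o pick_nth)}.
  move=> r1 r2 r1B r2B e; apply/ffunP=> i; apply: val_inj.
  have := transversal_vertex_inj (pick_nthP r1 ^~ r1B) (pick_nthP r2 ^~ r2B) e i.
  move: r1B r2B; rewrite !inE => /forallP/(_ i) r1i /forallP/(_ i) r2i.
  by move/eqP; rewrite /pick_nth nth_uniq ?enum_uniq -?cardE // => /eqP.
rewrite -(card_in_imset pick_inj); apply: subset_leq_card.
apply/subsetP=> _ /imsetP[r rB ->]; rewrite inE.
by apply: transversal_vertex_of => i; apply: pick_nthP.
Qed.

Section Outmap.

Variable sigma : {set 'I_n} -> {set 'I_n}.

Lemma refined_index_lt M p i :
  sigma p :&: p = set0 -> vertex_of blk M p ->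
  refined_index blk sigma M p i < #|M :&: block blk i|.
Proof.
move=> sigma_p /andP[_ /forallP p1]; have /cards1P[m pi] := p1 i.
have : m \in p :&: (M :&: block blk i) by rewrite pi set11.
rewrite inE => /andP[mp mMi].
apply: proper_card; apply/properP; split; first by apply/subsetP=> x /setIP[].
exists m => //; rewrite !inE negb_and; apply/orP; left; apply/negP=> /andP[ms _].
have : m \in sigma p :&: p by apply/setIP.
by rewrite sigma_p inE.
Qed.

Lemma sink_refined_index M p i :
  is_sink blk sigma M p -> refined_index blk sigma M p i = 0.
Proof. by case/andP=> _ /eqP s0; rewrite /refined_index s0 set0I cards0. Qed.

Lemma refined_index0_sink M p :
  vertex_of blk M p -> (forall i, refined_index blk sigma M p i = 0) ->
  is_sink blk sigma M p.
Proof.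
move=> pM r0; rewrite /is_sink pM -subset0; apply/subsetP=> m m_out.
have /eqP := r0 (blk m); rewrite cards_eq0 => /eqP/setP/(_ m).
by move: m_out; rewrite !inE => /andP[-> ->]; rewrite eqxx.
Qed.

Lemma is_sink_subgrid (M M' p : {set 'I_n}) :
  M \subset M' -> vertex_of blk M p -> is_sink blk sigma M' p ->
  is_sink blk sigma M p.
Proof.
move=> MM' pM /andP[_ /eqP s0]; rewrite /is_sink pM -subset0 -s0.
exact: setIS.
Qed.

Hypothesis sigma_disjoint : forall p, vertex blk p -> sigma p :&: p = set0.

(* [insubd] is harmless: by [refined_index_lt] the index never exceeds [n]. *)
Definition refined_index_vec M p : {ffun 'I_d -> 'I_n} :=
  [ffun i => insubd o (refined_index blk sigma M p i)].

Lemma refined_index_vecE M p i :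
  vertex_of blk M p -> val (refined_index_vec M p i) = refined_index blk sigma M p i.
Proof.
move=> pM; rewrite ffunE val_insubd.
have lt := refined_index_lt i (sigma_disjoint (vertex_of_vertex pM)) pM.
by rewrite (leq_trans lt) // (leq_trans (max_card _)) ?card_ord.
Qed.

Lemma refined_index_vec_box M :
  refined_index_vec M @: vertex_set M \subset index_box M.
Proof.
apply/subsetP=> r /imsetP[p]; rewrite inE => pM ->; rewrite inE.
apply/forallP=> i; rewrite refined_index_vecE //.
exact: refined_index_lt (sigma_disjoint (vertex_of_vertex pM)) pM.
Qed.

Lemma exists_sink M :
  subgrid blk M -> {in vertex_set M &, injective (refined_index_vec M)} ->
  exists z, is_sink blk sigma M z.
Proof.
move=> M_blocks r_inj.
have onto : refined_index_vec M @: vertex_set M = index_box M.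
  apply/eqP; rewrite eqEcard refined_index_vec_box (card_in_imset r_inj).
  exact: card_index_box_leq.
have : [ffun=> o] \in index_box M.
  by rewrite inE; apply/forallP=> i; rewrite ffunE card_gt0 (forallP M_blocks).
rewrite -onto => /imsetP[z]; rewrite inE => zM z0.
exists z; apply: refined_index0_sink => // i.
by rewrite -refined_index_vecE // -z0 ffunE.
Qed.

Lemma USO_of_not_GUV2 : ~ GUV2 blk sigma -> USO blk sigma.
Proof.
move=> noGUV2 M M_blocks.
have r_inj p q : vertex_of blk M p -> vertex_of blk M q ->
    (forall i, refined_index blk sigma M p i = refined_index blk sigma M q i) -> p = q.
  move=> pM qM e; apply: NNPP => pq; apply: noGUV2.
  by exists M, p, q; split => //; apply/eqP.
have [|z zM] := exists_sink M_blocks.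
  move=> p q; rewrite !inE => pM qM /ffunP e; apply: r_inj => // i.
  by rewrite -!refined_index_vecE // e.
exists z; split => // q qM; apply: r_inj; [by case/andP: qM | by case/andP: zM |].
by move=> i; rewrite !sink_refined_index.
Qed.

End Outmap.

End Grid.

Theorem lemma6p3p5 (n d : nat) (blk : 'I_n -> 'I_d)
  (sigma : {set 'I_n} -> {set 'I_n})
  (M1 M2 M3 x y : {set 'I_n}) :
  0 < n -> 0 < d -> grid_ok blk ->
  (forall p, vertex blk p -> sigma p :&: p = set0) ->
  subgrid blk M1 -> subgrid blk M2 -> subgrid blk M3 ->
  (forall p, ~~ (vertex_of blk M1 p && vertex_of blk M2 p)) ->
  (forall p, vertex_of blk M3 p = vertex_of blk M1 p || vertex_of blk M2 p) ->
  unique_sink blk sigma M1 x -> unique_sink blk sigma M2 y ->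
  (unique_sink blk sigma M3 x \/ unique_sink blk sigma M3 y) \/
  (~ USO blk sigma /\ (GUV1 blk sigma \/ GUV2 blk sigma)).
Proof.
move=> n_gt0 _ _ sigma_disjoint M1_blocks M2_blocks M3_blocks _ V3
  [_ x_unique] [_ y_unique].
have M13 : M1 \subset M3 by apply: (subgrid_subset M1_blocks) => p pM; rewrite V3 pM.
have M23 : M2 \subset M3 by apply: (subgrid_subset M2_blocks) => p pM; rewrite V3 pM orbT.
have [[z [zM3 z_unique]] | no_unique] :=
  classic (exists z, unique_sink blk sigma M3 z).
  left; have /andP[] := zM3; rewrite V3 => /orP[] zM _.
    by left; rewrite -(x_unique z (is_sink_subgrid M13 zM zM3)).
  by right; rewrite -(y_unique z (is_sink_subgrid M23 zM zM3)).
have notUSO : ~ USO blk sigma by move=> uso; apply/no_unique/uso.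
right; split => //; right; apply: NNPP => noGUV2.
exact/notUSO/(USO_of_not_GUV2 n_gt0 sigma_disjoint).
Qed.
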